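(* Let $G$ be a finite metric graph and let $$\lambda_G := \inf\left\{ \frac{\pi^2}{u_C^2} : C \text{ a cycle in } G \text{ with commensurate edges}\right\}$$ (with $\inf\emptyset=+\infty$). Then $G$ has no resonance in $(-\infty,\lambda_G)$, i.e. $R(G,\lambda)=\{0\}$ for every real $\lambda<\lambda_G$.
   Context: A finite metric graph $G$ has finite vertex set $V$ and finite edge set $E$ (loops and multiple edges allowed) with lengths $L:E\to(0,\infty)$, each edge identified with $[0,L(e)]$. $-\Delta_G$ denotes the Laplacian on $G$ with Kirchhoff vertex conditions: it acts as $-f_e''$ on each edge, with domain consisting of functions that are edgewise $H^2$, continuous at every vertex, and satisfy $\sum_{t(e)=v} f_e'(L(e)) - \sum_{o(e)=v} f_e'(0)=0$ at every vertex $v$ (where $o(e),t(e)$ are the vertices identified with $0$ and $L(e)$). A real number $\lambda$ is a (real) resonance of $G$ if there is a nontrivial $f\in\ker(-\Delta_G-\lambda)$ with $f(v)=0$ for all vertices $v$; $R(G,\lambda)$ denotes the space of such $f$ (together with $0$). A cycle $C$ has commensurate edges if its edge lengths are rational multiples of each other; then $u_C$ denotes the largest number such that every edge length in $C$ is a natural multiple of $u_C$. *)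

From Stdlib Require Import Reals List Arith ZArith.
Open Scope R_scope.

(** A finite metric graph: vertices are 0..nV-1, edges are 0..nE-1;
    edge e goes from vertex [src e] (identified with 0) to vertex [tgt e]
    (identified with [len e]).  Loops and multiple edges are allowed. *)
Record mgraph := MGraph {
  nV : nat;
  nE : nat;
  src : nat -> nat;
  tgt : nat -> nat;
  len : nat -> R
}.

Definition wf_graph (G : mgraph) : Prop :=
  forall e, (e < nE G)%nat ->
    (src G e < nV G)%nat /\ (tgt G e < nV G)%nat /\ 0 < len G e.

Fixpoint sum_upto (n : nat) (g : nat -> R) : R :=
  match n with
  | O => 0
  | S m => sum_upto m g + g m
  end.

Definition cont_within (h : R -> R) (l x : R) : Prop :=
  limit1_in h (fun y => 0 <= y <= l) (h x) x.

Definition edge_eigen (lam l : R) (fe dfe : R -> R) : Prop :=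
  (forall x, 0 < x < l ->
     derivable_pt_lim fe x (dfe x) /\ derivable_pt_lim dfe x (- lam * fe x)) /\
  (forall x, 0 <= x <= l -> cont_within fe l x /\ cont_within dfe l x).

(** [f] (edgewise functions, edgewise derivatives [df]) lies in
    ker(-Delta_G - lam) with Kirchhoff conditions; [F] gives the vertex values. *)
Definition in_kernel (G : mgraph) (lam : R) (f df : nat -> R -> R)
    (F : nat -> R) : Prop :=
  (forall e, (e < nE G)%nat -> edge_eigen lam (len G e) (f e) (df e)) /\
  (forall e, (e < nE G)%nat ->
     f e 0 = F (src G e) /\ f e (len G e) = F (tgt G e)) /\
  (forall v, (v < nV G)%nat ->
     sum_upto (nE G) (fun e => if Nat.eqb (tgt G e) v then df e (len G e) else 0)
     - sum_upto (nE G) (fun e => if Nat.eqb (src G e) v then df e 0 else 0) = 0).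

Definition in_resonance_space (G : mgraph) (lam : R) (f df : nat -> R -> R) : Prop :=
  exists F : nat -> R, in_kernel G lam f df F /\ (forall v, (v < nV G)%nat -> F v = 0).

Definition is_cycle (G : mgraph) (es vs : list nat) : Prop :=
  (1 <= length es)%nat /\ length vs = length es /\
  NoDup es /\ NoDup vs /\
  (forall e, In e es -> (e < nE G)%nat) /\
  (forall i, (i < length es)%nat ->
     let e := nth i es 0%nat in
     let a := nth i vs 0%nat in
     let b := nth ((i + 1) mod length es) vs 0%nat in
     (src G e = a /\ tgt G e = b) \/ (src G e = b /\ tgt G e = a)).

Definition commensurate (G : mgraph) (es : list nat) : Prop :=
  forall e e', In e es -> In e' es ->
    exists p q : Z, q <> 0%Z /\ IZR q * len G e = IZR p * len G e'.

Definition common_unit (G : mgraph) (es : list nat) (u : R) : Prop :=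
  0 < u /\ forall e, In e es -> exists n : nat, len G e = INR n * u.

Definition is_uC (G : mgraph) (es : list nat) (u : R) : Prop :=
  common_unit G es u /\ forall u', common_unit G es u' -> u' <= u.

(* On an edge of length L, a solution of -y'' = lam y vanishing at both ends is zero when
   lam <= 0, because y y' is nondecreasing.  When lam = s^2 > 0 it is (y'(0)/s) sin(s x), so
   either it is zero or L is a multiple of pi/s, and in both cases |y'(L)| = |y'(0)|.  By
   Kirchhoff's condition, the edges with y'(0) <> 0 then meet no vertex in a single non-loop
   edge, so, if there are any, they contain a cycle.  All its lengths are multiples of pi/s,
   hence u_C >= pi/s and pi^2/u_C^2 <= lam. *)

From Stdlib Require Import Reals List Arith ZArith Lra Lia Classical.
Open Scope R_scope.

(** * Functions on a closed interval *)

Lemma cont_within_continuity_pt h L p : continuity_pt h p -> cont_within h L p.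
Proof.
  intros Hc eps Heps; destruct (Hc eps Heps) as [d [Hd Hnear]].
  exists d; split; [exact Hd|]; intros x [Hx Hxp].
  destruct (Req_dec p x) as [<-|Hne].
  - simpl; unfold Rdist; rewrite Rminus_diag, Rabs_R0; exact Heps.
  - apply Hnear; repeat split; auto.
Qed.

Lemma cont_within_const c L p : cont_within (fun _ => c) L p.
Proof. exact (limit_free (fun _ => c) _ p p). Qed.

Lemma interior_point_near L p r : 0 < L -> 0 <= p <= L -> 0 < r ->
  exists y, 0 < y < L /\ Rabs (y - p) < r.
Proof.
  intros HL Hp Hr.
  set (t := Rmin r (L / 2) / 2).
  assert (Ht : 0 < t /\ t < r /\ t < L / 2).
  { assert (Rmin r (L / 2) <= r) by apply Rmin_l.
    assert (Rmin r (L / 2) <= L / 2) by apply Rmin_r.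
    assert (0 < Rmin r (L / 2)) by (apply Rmin_glb_lt; lra).
    unfold t; lra. }
  destruct (Rle_dec p (L / 2)).
  - exists (p + t); split; [lra|]. rewrite Rabs_pos_eq; lra.
  - exists (p - t); split; [lra|]. rewrite Rabs_left; lra.
Qed.

Lemma cont_within_le_near h k L p r : 0 < L -> 0 <= p <= L -> 0 < r ->
  cont_within h L p -> cont_within k L p ->
  (forall y, 0 < y < L -> Rabs (y - p) < r -> h y <= k y) -> h p <= k p.
Proof.
  intros HL Hp Hr Hh Hk Hle. apply Rnot_lt_le; intros Hlt.
  set (eps := (h p - k p) / 2).
  destruct (Hh eps ltac:(unfold eps; lra)) as [d1 [Hd1 Hh1]].
  destruct (Hk eps ltac:(unfold eps; lra)) as [d2 [Hd2 Hk2]].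
  assert (Hd : 0 < Rmin r (Rmin d1 d2)) by (repeat apply Rmin_glb_lt; lra).
  destruct (interior_point_near L p _ HL Hp Hd) as [y [Hy Hyp]].
  assert (Rmin r (Rmin d1 d2) <= r) by apply Rmin_l.
  assert (Rmin r (Rmin d1 d2) <= Rmin d1 d2) by apply Rmin_r.
  assert (Rmin d1 d2 <= d1) by apply Rmin_l.
  assert (Rmin d1 d2 <= d2) by apply Rmin_r.
  simpl in Hh1, Hk2; unfold Rdist in Hh1, Hk2.
  specialize (Hh1 y ltac:(split; lra)). specialize (Hk2 y ltac:(split; lra)).
  specialize (Hle y Hy ltac:(lra)).
  apply Rabs_def2 in Hh1; apply Rabs_def2 in Hk2.
  unfold eps in *; lra.
Qed.

Lemma cont_within_eq_interior h k L p : 0 < L -> 0 <= p <= L ->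
  cont_within h L p -> cont_within k L p ->
  (forall x, 0 < x < L -> h x = k x) -> h p = k p.
Proof.
  intros HL Hp Hh Hk Heq.
  apply Rle_antisym; apply (cont_within_le_near _ _ L p 1); auto; try lra;
    intros y Hy _; rewrite Heq by exact Hy; lra.
Qed.

Lemma zero_derivative_interior_eq h L :
  (forall x, 0 < x < L -> derivable_pt_lim h x 0) ->
  forall a b, 0 < a < L -> 0 < b < L -> h a = h b.
Proof.
  intros Hd.
  assert (Hlt : forall a b, 0 < a -> a < b -> b < L -> h a = h b).
  { intros a b Ha Hab Hb.
    destruct (MVT_cor2 h (fun _ => 0) a b Hab) as [c [Hc _]];
      [intros c Hc; apply Hd; lra | lra]. }
  intros a b Ha Hb; destruct (Rtotal_order a b) as [|[->|]];
    [apply Hlt | | symmetry; apply Hlt]; lra.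
Qed.

Lemma zero_derivative_const h L : 0 < L ->
  (forall x, 0 <= x <= L -> cont_within h L x) ->
  (forall x, 0 < x < L -> derivable_pt_lim h x 0) ->
  forall x, 0 <= x <= L -> h x = h 0.
Proof.
  intros HL Hc Hd.
  assert (Hmid : forall x, 0 <= x <= L -> h x = h (L / 2)).
  { intros x Hx; apply (cont_within_eq_interior h (fun _ => h (L / 2)) L x HL Hx);
      [apply Hc, Hx | apply cont_within_const |].
    intros y Hy; apply (zero_derivative_interior_eq h L Hd); lra. }
  intros x Hx; rewrite (Hmid x Hx), (Hmid 0); lra.
Qed.

Lemma nonneg_derivative_le h h' L :
  (forall x, 0 < x < L -> derivable_pt_lim h x (h' x) /\ 0 <= h' x) ->
  forall a b, 0 < a -> a <= b -> b < L -> h a <= h b.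
Proof.
  intros Hd a b Ha Hab Hb; destruct (Req_dec a b) as [->|Hne]; [lra|].
  destruct (MVT_cor2 h h' a b) as [c [Hc Hcab]]; [lra | intros c Hc; apply Hd; lra |].
  assert (0 <= h' c) by (apply Hd; lra). nra.
Qed.

Lemma nonneg_derivative_bounds h h' L : 0 < L -> cont_within h L 0 -> cont_within h L L ->
  (forall x, 0 < x < L -> derivable_pt_lim h x (h' x) /\ 0 <= h' x) ->
  forall x, 0 < x < L -> h 0 <= h x <= h L.
Proof.
  intros HL H0 HL' Hd x Hx; split.
  - apply (cont_within_le_near h (fun _ => h x) L 0 x); auto; try lra;
      [apply cont_within_const |].
    intros y Hy Hyx; rewrite Rminus_0_r, Rabs_pos_eq in Hyx by lra.
    apply (nonneg_derivative_le h h' L Hd); lra.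
  - apply (cont_within_le_near (fun _ => h x) h L L (L - x)); auto; try lra;
      [apply cont_within_const |].
    intros y Hy Hyx; rewrite Rabs_left in Hyx by lra.
    apply (nonneg_derivative_le h h' L Hd); lra.
Qed.

(** * Eigenfunctions on an edge *)

Lemma edge_dirichlet_nonpos lam L y y' : lam <= 0 -> 0 < L -> edge_eigen lam L y y' ->
  y 0 = 0 -> y L = 0 -> forall x, 0 <= x <= L -> y x = 0.
Proof.
  intros Hlam HL [Hd Hc] Hy0 HyL.
  set (g := fun x => y x * y' x).
  assert (Hgd : forall x, 0 < x < L ->
    derivable_pt_lim g x (y' x * y' x + y x * (- lam * y x))).
  { intros x Hx; destruct (Hd x Hx) as [Dy Dy'].
    apply (derivable_pt_lim_mult y y' x); assumption. }
  assert (Hg0 : forall x, 0 < x < L -> g x = 0).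
  { intros x Hx.
    assert (Hgc : forall p, 0 <= p <= L -> cont_within g L p)
      by (intros p Hp; destruct (Hc p Hp); apply limit_mul; assumption).
    destruct (nonneg_derivative_bounds g (fun z => y' z * y' z + y z * (- lam * y z)) L HL
      (Hgc 0 ltac:(lra)) (Hgc L ltac:(lra))) with (x := x) as [Hlo Hhi]; auto.
    - intros z Hz; split; [apply Hgd, Hz | nra].
    - unfold g in *; rewrite Hy0 in Hlo; rewrite HyL in Hhi; lra. }
  assert (Hy'0 : forall x, 0 < x < L -> y' x = 0).
  { intros x Hx.
    assert (Hg'0 : derivable_pt_lim g x 0).
    { apply (derivable_pt_lim_locally_ext (fct_cte 0) g x 0 L); auto.
      - intros z Hz; rewrite Hg0 by exact Hz; reflexivity.
      - apply derivable_pt_lim_const. }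
    pose proof (uniqueness_limite g x _ _ (Hgd x Hx) Hg'0); nra. }
  intros x Hx; rewrite <- Hy0.
  apply (zero_derivative_const y L HL); auto.
  - intros p Hp; apply (Hc p Hp).
  - intros z Hz; rewrite <- (Hy'0 z Hz); apply (Hd z Hz).
Qed.

Lemma derivable_pt_lim_cos_scal s x :
  derivable_pt_lim (fun t => cos (s * t)) x (- s * sin (s * x)).
Proof.
  replace (- s * sin (s * x)) with (- sin (s * x) * s) by ring.
  apply (derivable_pt_lim_comp (fun t => s * t) cos x s), derivable_pt_lim_cos.
  pose proof (derivable_pt_lim_scal id s x 1 (derivable_pt_lim_id x)) as Dlin.
  rewrite Rmult_1_r in Dlin; exact Dlin.
Qed.

Lemma derivable_pt_lim_sin_scal s x :
  derivable_pt_lim (fun t => sin (s * t)) x (s * cos (s * x)).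
Proof.
  replace (s * cos (s * x)) with (cos (s * x) * s) by ring.
  apply (derivable_pt_lim_comp (fun t => s * t) sin x s), derivable_pt_lim_sin.
  pose proof (derivable_pt_lim_scal id s x 1 (derivable_pt_lim_id x)) as Dlin.
  rewrite Rmult_1_r in Dlin; exact Dlin.
Qed.

Lemma cont_within_cos_scal s L p : cont_within (fun t => cos (s * t)) L p.
Proof.
  apply cont_within_continuity_pt, derivable_continuous_pt.
  eexists; apply derivable_pt_lim_cos_scal.
Qed.

Lemma cont_within_sin_scal s L p : cont_within (fun t => sin (s * t)) L p.
Proof.
  apply cont_within_continuity_pt, derivable_continuous_pt.
  eexists; apply derivable_pt_lim_sin_scal.
Qed.

Lemma edge_eigen_pos_solution lam L y y' : 0 < lam -> 0 < L -> edge_eigen lam L y y' ->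
  forall x, 0 <= x <= L ->
    y x = y 0 * cos (sqrt lam * x) + y' 0 / sqrt lam * sin (sqrt lam * x) /\
    y' x = y' 0 * cos (sqrt lam * x) - sqrt lam * y 0 * sin (sqrt lam * x).
Proof.
  intros Hlam HL [Hd Hc].
  set (s := sqrt lam).
  assert (Hs : 0 < s) by (apply sqrt_lt_R0, Hlam).
  assert (Hss : s * s = lam) by (apply sqrt_sqrt; lra).
  (* the coordinates of (y, y'/s) in the rotating frame (cos st, sin st) are conserved *)
  set (A := fun t => y t * cos (s * t) - / s * (y' t * sin (s * t))).
  set (B := fun t => y t * sin (s * t) + / s * (y' t * cos (s * t))).
  assert (HA : forall x, 0 <= x <= L -> A x = y 0).
  { replace (y 0) with (A 0) by (unfold A; rewrite Rmult_0_r, cos_0, sin_0; ring).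
    apply (zero_derivative_const A L HL).
    - intros p Hp; destruct (Hc p Hp) as [Cy Cy'].
      apply limit_minus; [apply limit_mul; [exact Cy | apply cont_within_cos_scal]|].
      apply limit_mul; [apply cont_within_const|].
      apply limit_mul; [exact Cy' | apply cont_within_sin_scal].
    - intros x Hx; destruct (Hd x Hx) as [Dy Dy'].
      replace 0 with (y' x * cos (s * x) + y x * (- s * sin (s * x))
        - / s * ((- lam * y x) * sin (s * x) + y' x * (s * cos (s * x))))
        by (rewrite <- Hss; field; lra).
      apply (derivable_pt_lim_minus (fun t => y t * cos (s * t))
               (fun t => / s * (y' t * sin (s * t)))).
      + apply (derivable_pt_lim_mult y (fun t => cos (s * t)));
          [exact Dy | apply derivable_pt_lim_cos_scal].
      + apply (derivable_pt_lim_scal (fun t => y' t * sin (s * t))).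
        apply (derivable_pt_lim_mult y' (fun t => sin (s * t)));
          [exact Dy' | apply derivable_pt_lim_sin_scal]. }
  assert (HB : forall x, 0 <= x <= L -> B x = y' 0 / s).
  { replace (y' 0 / s) with (B 0) by (unfold B; rewrite Rmult_0_r, cos_0, sin_0; field; lra).
    apply (zero_derivative_const B L HL).
    - intros p Hp; destruct (Hc p Hp) as [Cy Cy'].
      apply limit_plus; [apply limit_mul; [exact Cy | apply cont_within_sin_scal]|].
      apply limit_mul; [apply cont_within_const|].
      apply limit_mul; [exact Cy' | apply cont_within_cos_scal].
    - intros x Hx; destruct (Hd x Hx) as [Dy Dy'].
      replace 0 with (y' x * sin (s * x) + y x * (s * cos (s * x))
        + / s * ((- lam * y x) * cos (s * x) + y' x * (- s * sin (s * x))))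
        by (rewrite <- Hss; field; lra).
      apply (derivable_pt_lim_plus (fun t => y t * sin (s * t))
               (fun t => / s * (y' t * cos (s * t)))).
      + apply (derivable_pt_lim_mult y (fun t => sin (s * t)));
          [exact Dy | apply derivable_pt_lim_sin_scal].
      + apply (derivable_pt_lim_scal (fun t => y' t * cos (s * t))).
        apply (derivable_pt_lim_mult y' (fun t => cos (s * t)));
          [exact Dy' | apply derivable_pt_lim_cos_scal]. }
  intros x Hx.
  replace (y' 0) with (s * (y' 0 / s)) at 2 by (field; lra).
  rewrite <- (HA x Hx), <- (HB x Hx); unfold A, B.
  pose proof (sin2_cos2 (s * x)) as Hpyth; unfold Rsqr in Hpyth.
  split.
  - transitivity (y x * (sin (s * x) * sin (s * x) + cos (s * x) * cos (s * x)));
      [rewrite Hpyth; ring | field; lra].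
  - transitivity (y' x * (sin (s * x) * sin (s * x) + cos (s * x) * cos (s * x)));
      [rewrite Hpyth; ring | field; lra].
Qed.

Lemma edge_eigen_pos_cauchy_zero lam L y y' : 0 < lam -> 0 < L -> edge_eigen lam L y y' ->
  y 0 = 0 -> y' 0 = 0 -> forall x, 0 <= x <= L -> y x = 0.
Proof.
  intros Hlam HL He Hy0 Hy'0 x Hx.
  rewrite (proj1 (edge_eigen_pos_solution lam L y y' Hlam HL He x Hx)), Hy0, Hy'0.
  unfold Rdiv; ring.
Qed.

Lemma edge_dirichlet_pos_sin lam L y y' : 0 < lam -> 0 < L -> edge_eigen lam L y y' ->
  y 0 = 0 -> y L = 0 -> y' 0 <> 0 -> sin (sqrt lam * L) = 0.
Proof.
  intros Hlam HL He Hy0 HyL Hy'0.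
  pose proof (proj1 (edge_eigen_pos_solution lam L y y' Hlam HL He L ltac:(lra))) as HsolL.
  rewrite Hy0, HyL, Rmult_0_l, Rplus_0_l in HsolL.
  assert (Hs : 0 < sqrt lam) by (apply sqrt_lt_R0, Hlam).
  destruct (Rmult_integral _ _ (eq_sym HsolL)) as [Hc|]; [|assumption].
  exfalso; apply Hy'0.
  apply (Rmult_eq_reg_r (/ sqrt lam)); [unfold Rdiv in Hc; lra | apply Rinv_neq_0_compat; lra].
Qed.

Lemma edge_dirichlet_pos_flux lam L y y' : 0 < lam -> 0 < L -> edge_eigen lam L y y' ->
  y 0 = 0 -> y L = 0 -> Rabs (y' L) = Rabs (y' 0).
Proof.
  intros Hlam HL He Hy0 HyL.
  rewrite (proj2 (edge_eigen_pos_solution lam L y y' Hlam HL He L ltac:(lra))), Hy0.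
  destruct (Req_dec (y' 0) 0) as [->|Hy'0]; [f_equal; ring|].
  pose proof (edge_dirichlet_pos_sin lam L y y' Hlam HL He Hy0 HyL Hy'0) as Hsin.
  pose proof (sin2_cos2 (sqrt lam * L)) as Hpyth; unfold Rsqr in Hpyth.
  rewrite Hsin, Rmult_0_r, Rminus_0_r, Rabs_mult.
  replace (Rabs (cos (sqrt lam * L))) with 1; [ring|].
  destruct (Rle_or_lt 0 (cos (sqrt lam * L)));
    [rewrite Rabs_pos_eq | rewrite Rabs_left]; nra.
Qed.

Lemma edge_dirichlet_pos_length lam L y y' : 0 < lam -> 0 < L -> edge_eigen lam L y y' ->
  y 0 = 0 -> y L = 0 -> y' 0 <> 0 -> exists k : nat, L = INR k * (PI / sqrt lam).
Proof.
  intros Hlam HL He Hy0 HyL Hy'0.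
  assert (Hs : 0 < sqrt lam) by (apply sqrt_lt_R0, Hlam).
  destruct (sin_eq_0_0 _ (edge_dirichlet_pos_sin lam L y y' Hlam HL He Hy0 HyL Hy'0))
    as [k Hk].
  assert (Hk0 : (0 <= k)%Z).
  { apply le_IZR; pose proof PI_RGT_0; nra. }
  exists (Z.to_nat k).
  rewrite INR_IZR_INZ, Z2Nat.id by exact Hk0.
  apply (Rmult_eq_reg_l (sqrt lam)); [rewrite Hk; field|]; lra.
Qed.

(** * Cycles in the support of a flow *)

Definition incident (G : mgraph) (e v : nat) : Prop := src G e = v \/ tgt G e = v.

Definition joins (G : mgraph) (e a b : nat) : Prop :=
  (src G e = a /\ tgt G e = b) \/ (src G e = b /\ tgt G e = a).

Lemma joins_incident G e a b v : joins G e a b -> incident G e v -> v = a \/ v = b.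
Proof. unfold joins, incident; intuition congruence. Qed.

Lemma incident_joins G e v : incident G e v -> exists w, joins G e w v.
Proof.
  intros [Hs|Ht]; [exists (tgt G e); right | exists (src G e); left]; auto.
Qed.

Lemma sum_upto_zero n g : (forall e, (e < n)%nat -> g e = 0) -> sum_upto n g = 0.
Proof.
  induction n as [|n IH]; intros Hg; simpl; [reflexivity|].
  rewrite IH, Hg; [ring | lia | intros; apply Hg; lia].
Qed.

Lemma sum_upto_single n g e : (e < n)%nat ->
  (forall e', (e' < n)%nat -> e' <> e -> g e' = 0) -> sum_upto n g = g e.
Proof.
  induction n as [|n IH]; intros He Hg; [lia|]; simpl.
  destruct (Nat.eq_dec e n) as [->|Hne].
  - rewrite sum_upto_zero; [ring|]; intros; apply Hg; lia.
  - rewrite IH, (Hg n); [ring | lia | lia | lia | intros; apply Hg; lia].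
Qed.

(* [a e] and [b e] are the fluxes of edge [e] at its source and at its target. *)
Lemma kirchhoff_second_edge (G : mgraph) (a b : nat -> R) v e
  (Hab : forall e, (e < nE G)%nat -> a e = 0 <-> b e = 0)
  (Hkir : sum_upto (nE G) (fun e => if Nat.eqb (tgt G e) v then b e else 0)
        - sum_upto (nE G) (fun e => if Nat.eqb (src G e) v then a e else 0) = 0) :
  (e < nE G)%nat -> a e <> 0 -> incident G e v -> src G e <> tgt G e ->
  exists e', (e' < nE G)%nat /\ a e' <> 0 /\ e' <> e /\ incident G e' v.
Proof.
  intros He Ha Hinc Hloop; apply NNPP; intros Hnone.
  assert (Hother : forall e', (e' < nE G)%nat -> e' <> e -> incident G e' v -> a e' = 0).
  { intros e' He' Hne Hinc'; apply NNPP; intros Ha'; apply Hnone; exists e'; auto. }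
  rewrite !(sum_upto_single _ _ e He) in Hkir.
  - destruct (Nat.eqb_spec (tgt G e) v), (Nat.eqb_spec (src G e) v).
    + congruence.
    + apply Ha, (Hab e He); lra.
    + apply Ha; lra.
    + destruct Hinc; contradiction.
  - intros e' He' Hne; destruct (Nat.eqb_spec (src G e') v); [|reflexivity].
    apply Hother; [..| left]; assumption.
  - intros e' He' Hne; destruct (Nat.eqb_spec (tgt G e') v); [|reflexivity].
    apply (Hab e' He'), Hother; [..| right]; assumption.
Qed.

Lemma firstn_In_l {A} (x : A) n l : In x (firstn n l) -> In x l.
Proof. intros Hin; rewrite <- (firstn_skipn n l); apply in_or_app; left; exact Hin. Qed.

Lemma NoDup_firstn {A} (l : list A) n : NoDup l -> NoDup (firstn n l).
Proof.
  intros Hnd; rewrite <- (firstn_skipn n l) in Hnd; exact (NoDup_app_remove_r _ _ Hnd).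
Qed.

Section SupportCycle.

Variable G : mgraph.
Hypothesis HG : wf_graph G.
Variable supp : nat -> Prop.
Hypothesis supp_edge : forall e, supp e -> (e < nE G)%nat.
Hypothesis supp_branch : forall v e, supp e -> incident G e v -> src G e <> tgt G e ->
  exists e', supp e' /\ e' <> e /\ incident G e' v.

(* A simple path [vs_0 - es_0 - vs_1 - ... - vs_n] of [supp]-edges, grown at its head [vs_0]. *)
Definition supp_path (vs es : list nat) : Prop :=
  length vs = S (length es) /\ NoDup vs /\ NoDup es /\
  (forall v, In v vs -> (v < nV G)%nat) /\ (forall e, In e es -> supp e) /\
  (forall j, (j < length es)%nat ->
     joins G (nth j es 0%nat) (nth j vs 0%nat) (nth (S j) vs 0%nat)).

Lemma supp_path_length vs es : supp_path vs es -> (length vs <= nV G)%nat.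
Proof.
  intros [_ [Hnd [_ [Hv _]]]].
  rewrite <- (length_seq (nV G) 0).
  apply NoDup_incl_length; [exact Hnd|].
  intros v Hin; apply in_seq; specialize (Hv v Hin); lia.
Qed.

Lemma supp_path_incident_head vs es e : supp_path vs es -> In e es ->
  incident G e (nth 0 vs 0%nat) -> e = nth 0 es 0%nat.
Proof.
  intros [Hl [Hnd [_ [_ [_ Hj]]]]] Hin Hinc.
  destruct (In_nth es e 0%nat Hin) as [[|j] [Hjl <-]]; [reflexivity | exfalso].
  destruct (joins_incident _ _ _ _ _ (Hj (S j) Hjl) Hinc) as [Heq|Heq];
    apply (proj1 (NoDup_nth vs 0%nat) Hnd) in Heq; lia.
Qed.

Lemma supp_path_close vs es m e' : supp_path vs es -> (m < length vs)%nat -> supp e' ->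
  ~ In e' es -> joins G e' (nth m vs 0%nat) (nth 0 vs 0%nat) ->
  is_cycle G (firstn m es ++ e' :: nil) (firstn (S m) vs) /\
  (forall e, In e (firstn m es ++ e' :: nil) -> supp e).
Proof.
  intros [Hl [Hndv [Hnde [_ [HS Hj]]]]] Hm He' Hnin Hclose.
  assert (Hlen : length (firstn m es ++ e' :: nil) = S m).
  { rewrite length_app, firstn_length_le by lia; simpl; lia. }
  assert (HSc : forall e, In e (firstn m es ++ e' :: nil) -> supp e).
  { intros e Hin; apply in_app_or in Hin as [Hin|[<-|[]]]; [|exact He'].
    apply HS, (firstn_In_l _ _ _ Hin). }
  split; [|exact HSc].
  unfold is_cycle; rewrite Hlen, firstn_length_le by lia.
  split; [lia|]; split; [reflexivity|]; split.
  { apply NoDup_app; [apply NoDup_firstn, Hnde | repeat constructor; auto |].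
    intros e Hin [<-|[]]; apply Hnin, (firstn_In_l _ _ _ Hin). }
  split; [apply NoDup_firstn, Hndv|].
  split; [intros e Hin; apply supp_edge, HSc, Hin|].
  intros i Hi; cbv zeta.
  destruct (Nat.eq_dec i m) as [->|Hne].
  - rewrite app_nth2, firstn_length_le, Nat.sub_diag by (rewrite ?firstn_length_le; lia).
    replace ((m + 1) mod S m)%nat with 0%nat
      by (rewrite Nat.add_1_r; symmetry; apply Nat.Div0.mod_same).
    rewrite !nth_firstn, !(proj2 (Nat.ltb_lt _ _)) by lia.
    destruct Hclose; tauto.
  - rewrite Nat.mod_small, app_nth1 by (rewrite ?firstn_length_le; lia).
    rewrite !nth_firstn, !(proj2 (Nat.ltb_lt _ _)) by lia.
    rewrite Nat.add_1_r; destruct (Hj i ltac:(lia)); tauto.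
Qed.

Lemma supp_path_extend vs es :
  supp_path vs es -> (exists eh, supp eh /\ incident G eh (nth 0 vs 0%nat)) ->
  (exists cs cv, is_cycle G cs cv /\ forall e, In e cs -> supp e) \/
  (exists w e', supp_path (w :: vs) (e' :: es) /\ supp e' /\ incident G e' w).
Proof.
  intros Hp Hpend.
  pose proof Hp as [Hl [Hndv [Hnde [Hv [HS Hj]]]]].
  set (v := nth 0 vs 0%nat).
  assert (Hnew : exists e', supp e' /\ incident G e' v /\ ~ In e' es).
  { destruct es as [|e1 es1] eqn:Hes; [destruct Hpend as [eh [? ?]]; exists eh; auto|].
    assert (Hv01 : v <> nth 1 vs 0%nat)
      by (intros Heq; apply (proj1 (NoDup_nth vs 0%nat) Hndv) in Heq; simpl in Hl; lia).
    assert (Hj0 := Hj 0%nat ltac:(simpl; lia)); simpl in Hj0.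
    assert (Hinc1 : incident G e1 v) by (unfold incident, joins in *; fold v in Hj0; tauto).
    destruct (supp_branch v e1 (HS e1 (or_introl eq_refl)) Hinc1) as [e' [He' [Hne Hinc']]].
    { unfold joins in Hj0; fold v in Hj0; intuition congruence. }
    exists e'; repeat split; auto.
    intros Hin; apply Hne, (supp_path_incident_head vs (e1 :: es1)); subst; auto. }
  destruct Hnew as [e' [He' [Hinc' Hnin]]].
  destruct (incident_joins _ _ _ Hinc') as [w Hw].
  destruct (classic (In w vs)) as [Hin|Hnin_w].
  - left; destruct (In_nth vs w 0%nat Hin) as [m [Hm Hmw]].
    exists (firstn m es ++ e' :: nil), (firstn (S m) vs).
    apply (supp_path_close vs es m e'); auto; rewrite Hmw; exact Hw.
  - right; exists w, e'.
    assert (Hwv : (w < nV G)%nat)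
      by (destruct (HG e' (supp_edge e' He')) as [? [? _]]; unfold joins in Hw; intuition lia).
    split; [|split; [exact He' | unfold incident, joins in *; tauto]].
    repeat split; simpl; auto using NoDup_cons.
    + intros u [<-|Hu]; auto.
    + intros e [<-|He]; auto.
    + intros [|j] Hjl; [exact Hw | apply Hj; lia].
Qed.

Lemma supp_path_cycle k vs es : (nV G < length vs + k)%nat -> supp_path vs es ->
  (exists eh, supp eh /\ incident G eh (nth 0 vs 0%nat)) ->
  exists cs cv, is_cycle G cs cv /\ forall e, In e cs -> supp e.
Proof.
  revert vs es; induction k as [|k IH]; intros vs es Hk Hp Hpend.
  - pose proof (supp_path_length vs es Hp); lia.
  - destruct (supp_path_extend vs es Hp Hpend) as [Hcyc | [w [e' [Hp' [He' Hinc']]]]];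
      [exact Hcyc|].
    apply (IH (w :: vs) (e' :: es)); [simpl; lia | exact Hp' | exists e'; auto].
Qed.

Lemma supp_cycle_exists e0 : supp e0 ->
  exists cs cv, is_cycle G cs cv /\ forall e, In e cs -> supp e.
Proof.
  intros He0.
  apply (supp_path_cycle (S (nV G)) (src G e0 :: nil) nil); [simpl; lia| |].
  - split; [reflexivity|]; split; [repeat constructor; intros []|]; split; [constructor|].
    split; [intros v [<-|[]]; apply (HG e0 (supp_edge e0 He0))|].
    split; [intros e []|]; intros j Hj; simpl in Hj; lia.
  - exists e0; split; [exact He0 | left; reflexivity].
Qed.

End SupportCycle.

(** * Resonances *)

Lemma resonance_edge G lam f df : wf_graph G -> in_resonance_space G lam f df ->
  forall e, (e < nE G)%nat ->
    edge_eigen lam (len G e) (f e) (df e) /\ f e 0 = 0 /\ f e (len G e) = 0.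
Proof.
  intros HG [F [[Heig [Hends _]] HF0]] e He.
  destruct (Hends e He) as [H0 HL], (HG e He) as [Hs [Ht _]].
  rewrite H0, HL, !HF0 by assumption; auto.
Qed.

(* Since [|df e (len G e)| = |df e 0|], Kirchhoff's condition at [v] cannot be met by a single
   non-loop edge of nonzero flux. *)
Lemma resonance_support_branch G lam f df : wf_graph G -> 0 < lam ->
  in_resonance_space G lam f df ->
  forall v e, (e < nE G)%nat /\ df e 0 <> 0 -> incident G e v -> src G e <> tgt G e ->
  exists e', ((e' < nE G)%nat /\ df e' 0 <> 0) /\ e' <> e /\ incident G e' v.
Proof.
  intros HG Hlam Hf v e [He Hdf] Hinc Hloop.
  assert (Hedge := resonance_edge G lam f df HG Hf).
  destruct Hf as [F [[_ [_ Hkir]] _]].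
  assert (Hv : (v < nV G)%nat) by (destruct (HG e He) as [? [? _]]; destruct Hinc; lia).
  assert (Hab : forall e, (e < nE G)%nat -> df e 0 = 0 <-> df e (len G e) = 0).
  { intros e' He'; destruct (Hedge e' He') as [Heig [H0 HL]].
    pose proof (edge_dirichlet_pos_flux lam _ _ _ Hlam (proj2 (proj2 (HG e' He')))
                  Heig H0 HL) as Hflux.
    split; intros Hz; apply NNPP; intros Hnz; apply (Rabs_no_R0 _ Hnz);
      [rewrite Hflux, Hz | rewrite <- Hflux, Hz]; apply Rabs_R0. }
  destruct (kirchhoff_second_edge G (fun e => df e 0) (fun e => df e (len G e)) v e Hab
              (Hkir v Hv) He Hdf Hinc Hloop) as [e' [He' [Hdf' [Hne Hinc']]]].
  exists e'; auto.
Qed.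

(** * The unit of a commensurate cycle *)

Lemma common_unit_commensurate G es u : (forall e, In e es -> 0 < len G e) ->
  common_unit G es u -> commensurate G es.
Proof.
  intros Hpos [_ Hmul] e e' He He'.
  destruct (Hmul e He) as [n Hn], (Hmul e' He') as [n' Hn'].
  exists (Z.of_nat n), (Z.of_nat n'); split.
  - specialize (Hpos e' He'); rewrite Hn' in Hpos.
    destruct n'; [simpl in Hpos; lra | lia].
  - rewrite <- !INR_IZR_INZ, Hn, Hn'; ring.
Qed.

Lemma common_unit_fraction G es u e0 : common_unit G es u -> In e0 es -> 0 < len G e0 ->
  exists j : nat, (0 < j)%nat /\ u = len G e0 / INR j.
Proof.
  intros [_ Hmul] He0 Hpos; destruct (Hmul e0 He0) as [[|j] Hj].
  - rewrite Hj in Hpos; simpl in Hpos; lra.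
  - exists (S j); split; [lia|]; rewrite Hj; field; apply not_0_INR; lia.
Qed.

Lemma uC_exists_ge G es w : (forall e, In e es -> 0 < len G e) -> es <> nil ->
  common_unit G es w -> exists u, is_uC G es u /\ w <= u.
Proof.
  intros Hpos Hne Hw.
  destruct es as [|e0 es0] eqn:Hes; [congruence|]; rewrite <- Hes in *.
  assert (He0 : In e0 es) by (rewrite Hes; left; reflexivity).
  set (L0 := len G e0).
  assert (HL0 : 0 < L0) by exact (Hpos e0 He0).
  (* every common unit is [L0 / j]; the largest one has the least admissible [j] *)
  set (Q := fun j => (0 < j)%nat /\ common_unit G es (L0 / INR j)).
  assert (HQ : forall u, common_unit G es u -> exists j, Q j /\ u = L0 / INR j).
  { intros u Hu; destruct (common_unit_fraction G es u e0 Hu He0 HL0) as [j [Hj Hju]].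
    fold L0 in Hju; exists j; split; [split; [exact Hj | rewrite <- Hju; exact Hu] |].
    exact Hju. }
  destruct (HQ w Hw) as [k [Hk ->]].
  destruct (dec_inh_nat_subset_has_unique_least_element Q (fun j => classic (Q j))
              (ex_intro _ k Hk)) as [m [[[Hm0 Hm] Hmin] _]].
  assert (Hle : forall j, Q j -> L0 / INR j <= L0 / INR m).
  { intros j Hj; specialize (Hmin j Hj).
    apply Rmult_le_compat_l; [lra|].
    apply Rinv_le_contravar; [apply lt_0_INR; lia | apply le_INR; exact Hmin]. }
  exists (L0 / INR m); split; [split; [exact Hm|] | exact (Hle k Hk)].
  intros u Hu; destruct (HQ u Hu) as [j [Hj ->]]; exact (Hle j Hj).
Qed.

Lemma PI_sqr_div_le lam u : 0 < lam -> PI / sqrt lam <= u -> PI ^ 2 / u ^ 2 <= lam.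
Proof.
  intros Hlam Hu.
  assert (Hs : 0 < sqrt lam) by (apply sqrt_lt_R0, Hlam).
  assert (Hw : 0 < PI / sqrt lam) by (apply Rdiv_lt_0_compat; [apply PI_RGT_0 | exact Hs]).
  apply (Rle_trans _ (PI ^ 2 / (PI / sqrt lam) ^ 2)).
  - apply Rmult_le_compat_l; [apply pow2_ge_0|].
    apply Rinv_le_contravar; [apply pow_lt, Hw | apply pow_incr; lra].
  - assert (Hss : sqrt lam * sqrt lam = lam) by (apply sqrt_sqrt; lra).
    pose proof PI_RGT_0; right; rewrite <- Hss at 2; field; lra.
Qed.

Theorem corollary3p3 (G : mgraph) (HG : wf_graph G) (lam : R)
  (Hlam : forall (es vs : list nat) (u : R),
      is_cycle G es vs -> commensurate G es -> is_uC G es u ->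
      lam < PI ^ 2 / u ^ 2)
  (f df : nat -> R -> R) (Hf : in_resonance_space G lam f df) :
  forall e x, (e < nE G)%nat -> 0 <= x <= len G e -> f e x = 0.
Proof.
  pose proof (resonance_edge G lam f df HG Hf) as Hedge.
  assert (Hlen : forall e, (e < nE G)%nat -> 0 < len G e) by apply HG.
  intros e x He Hx; destruct (Hedge e He) as [Heig [H0 HL]].
  destruct (Rle_or_lt lam 0) as [Hneg|Hpos].
  { exact (edge_dirichlet_nonpos lam _ _ _ Hneg (Hlen e He) Heig H0 HL x Hx). }
  apply (edge_eigen_pos_cauchy_zero lam _ _ _ Hpos (Hlen e He) Heig H0); [|exact Hx].
  apply NNPP; intros Hdf.
  destruct (supp_cycle_exists G HG (fun e => (e < nE G)%nat /\ df e 0 <> 0)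
              (fun e He => proj1 He) (resonance_support_branch G lam f df HG Hpos Hf)
              e (conj He Hdf)) as [es [vs [Hcyc Hsupp]]].
  assert (Hpos_es : forall e, In e es -> 0 < len G e)
    by (intros e' He'; apply Hlen, Hsupp, He').
  assert (Hunit : common_unit G es (PI / sqrt lam)).
  { split; [apply Rdiv_lt_0_compat; [apply PI_RGT_0 | apply sqrt_lt_R0, Hpos]|].
    intros e' He'; destruct (Hsupp e' He') as [He'lt Hdf'].
    destruct (Hedge e' He'lt) as [Heig' [H0' HL']].
    exact (edge_dirichlet_pos_length lam _ _ _ Hpos (Hlen e' He'lt) Heig' H0' HL' Hdf'). }
  assert (Hne : es <> nil) by (destruct Hcyc as [Hl _]; intros ->; simpl in Hl; lia).
  destruct (uC_exists_ge G es _ Hpos_es Hne Hunit) as [u [HuC Hu]].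
  pose proof (Hlam es vs u Hcyc (common_unit_commensurate G es _ Hpos_es Hunit) HuC).
  pose proof (PI_sqr_div_le lam u Hpos Hu); lra.
Qed.
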